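(* Let $(\mathscr{C}_1,T_1)$ and $(\mathscr{C}_2,T_2)$ be sites and $\mathscr{F}:\mathscr{C}_1\to\mathscr{C}_2$ a functor that sends $T_1$-coverings to $T_2$-coverings (i.e. $(\mathscr{F}(\pi_i))_i$ is a $T_2$-covering whenever $(\pi_i)_i$ is a $T_1$-covering), sends universal morphisms to universal morphisms, and preserves fibre products with universal morphisms. Then $\mathscr{F}$ is continuous.
   Context: A Grothendieck topology $T$ on $\mathscr{C}$ assigns to each object $X$ a set of families $(\pi_i:U_i\to X)_{i\in I}$ (''coverings'') such that isomorphisms form singleton coverings, coverings of members of a covering compose to coverings, and coverings pull back (pullbacks existing) along arbitrary morphisms to coverings; a site is a category with such a topology. A morphism is universal if its pullback along every morphism exists. A morphism $\pi:Y\to X$ is $T$-locally split if there is a covering $(\pi_i:U_i\to X)$ and morphisms $\rho_i:U_i\to Y$ with $\pi\circ\rho_i=\pi_i$. A functor $\mathscr{F}:(\mathscr{C}_1,T_1)\to(\mathscr{C}_2,T_2)$ is continuous if (i) it sends universal $T_1$-locally split morphisms to universal $T_2$-locally split morphisms, and (ii) it preserves fibre products with universal $T_1$-locally split morphisms. *)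

Set Implicit Arguments.
Unset Strict Implicit.

Record Category := {
  Obj :> Type;
  Hom : Obj -> Obj -> Type;
  idm : forall X, Hom X X;
  comp : forall X Y Z, Hom Y Z -> Hom X Y -> Hom X Z;  (* comp g f = g o f *)
  comp_assoc : forall X Y Z W (f : Hom X Y) (g : Hom Y Z) (h : Hom Z W),
      comp h (comp g f) = comp (comp h g) f;
  comp_id_l : forall X Y (f : Hom X Y), comp (idm Y) f = f;
  comp_id_r : forall X Y (f : Hom X Y), comp f (idm X) = f
}.

Arguments Hom {C} X Y : rename.
Arguments idm {C} X : rename.
Arguments comp {C X Y Z} g f : rename.

Definition is_iso (C : Category) (X Y : C) (f : Hom X Y) : Prop :=
  exists g : Hom Y X, comp g f = idm X /\ comp f g = idm Y.

Definition is_pullback (C : Category) (X Y Z P : C)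
  (f : Hom Y X) (g : Hom Z X) (p1 : Hom P Y) (p2 : Hom P Z) : Prop :=
  comp f p1 = comp g p2 /\
  forall (W : C) (a : Hom W Y) (b : Hom W Z), comp f a = comp g b ->
    exists u : Hom W P, (comp p1 u = a /\ comp p2 u = b) /\
      forall v : Hom W P, comp p1 v = a -> comp p2 v = b -> v = u.

Definition has_pullback (C : Category) (X Y Z : C) (f : Hom Y X) (g : Hom Z X) : Prop :=
  exists (P : C) (p1 : Hom P Y) (p2 : Hom P Z), is_pullback f g p1 p2.

Definition universal (C : Category) (Y X : C) (f : Hom Y X) : Prop :=
  forall (Z : C) (g : Hom Z X), has_pullback f g.

Record Family (C : Category) (X : C) := {
  fam_idx : Type;
  fam_src : fam_idx -> C;
  fam_map : forall i, Hom (fam_src i) X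
}.
Arguments fam_idx {C X} f.
Arguments fam_src {C X} f i.
Arguments fam_map {C X} f i.

Definition singleton_family (C : Category) (X Y : C) (f : Hom Y X) : Family X :=
  {| fam_idx := unit; fam_src := fun _ => Y; fam_map := fun _ => f |}.

Definition compose_family (C : Category) (X : C) (U : Family X)
  (V : forall i : fam_idx U, Family (fam_src U i)) : Family X :=
  {| fam_idx := { i : fam_idx U & fam_idx (V i) };
     fam_src := fun ij => fam_src (V (projT1 ij)) (projT2 ij);
     fam_map := fun ij => comp (fam_map U (projT1 ij)) (fam_map (V (projT1 ij)) (projT2 ij)) |}.

(** Family of (first) projections of chosen pullbacks
    P_i = U_i x_X Z  -->  Z  along g : Z -> X. *)
Definition pullback_family (C : Category) (Z : C) (I : Type) (P : I -> C)
  (q : forall i, Hom (P i) Z) : Family Z :=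
  {| fam_idx := I; fam_src := P; fam_map := q |}.

Record Topology (C : Category) := {
  covering : forall X : C, Family X -> Prop;
  cov_iso : forall (X Y : C) (f : Hom Y X), is_iso f -> covering (singleton_family f);
  cov_comp : forall (X : C) (U : Family X) (V : forall i, Family (fam_src U i)),
      covering U -> (forall i, covering (V i)) -> covering (compose_family V);
  cov_pullback : forall (X Z : C) (U : Family X) (g : Hom Z X),
      covering U ->
      forall (P : fam_idx U -> C) (p1 : forall i, Hom (P i) (fam_src U i))
             (p2 : forall i, Hom (P i) Z),
        (forall i, is_pullback (fam_map U i) g (p1 i) (p2 i)) ->
        covering (pullback_family p2)
}.
Arguments covering {C} t {X} _.

Definition locally_split (C : Category) (T : Topology C) (Y X : C) (f : Hom Y X) : Prop :=
  exists U : Family X, covering T U /\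
    exists rho : forall i, Hom (fam_src U i) Y,
      forall i, comp f (rho i) = fam_map U i.

Record Functor (C D : Category) := {
  Fobj :> C -> D;
  Fmor : forall X Y : C, Hom X Y -> Hom (Fobj X) (Fobj Y);
  Fmor_id : forall X, Fmor (idm X) = idm (Fobj X);
  Fmor_comp : forall X Y Z (f : Hom X Y) (g : Hom Y Z),
      Fmor (comp g f) = comp (Fmor g) (Fmor f)
}.
Arguments Fmor {C D} f0 {X Y} _.

Definition image_family (C D : Category) (F : Functor C D) (X : C) (U : Family X)
  : Family (F X) :=
  {| fam_idx := fam_idx U; fam_src := fun i => F (fam_src U i);
     fam_map := fun i => Fmor F (fam_map U i) |}.

Definition preserves_coverings (C D : Category) (T1 : Topology C) (T2 : Topology D)
  (F : Functor C D) : Prop :=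
  forall (X : C) (U : Family X), covering T1 U -> covering T2 (image_family F U).

Definition preserves_universal (C D : Category) (F : Functor C D) : Prop :=
  forall (Y X : C) (f : Hom Y X), universal f -> universal (Fmor F f).

Definition preserves_pullbacks_with (C D : Category) (F : Functor C D)
  (Q : forall Y X : C, Hom Y X -> Prop) : Prop :=
  forall (X Y Z P : C) (f : Hom Y X) (g : Hom Z X) (p1 : Hom P Y) (p2 : Hom P Z),
    Q Y X f -> is_pullback f g p1 p2 ->
    is_pullback (Fmor F f) (Fmor F g) (Fmor F p1) (Fmor F p2).

Definition universal_locally_split (C : Category) (T : Topology C) (Y X : C)
  (f : Hom Y X) : Prop := universal f /\ locally_split T f.

Definition continuous (C D : Category) (T1 : Topology C) (T2 : Topology D)
  (F : Functor C D) : Prop :=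
  (forall (Y X : C) (f : Hom Y X),
      universal_locally_split T1 f -> universal_locally_split T2 (Fmor F f)) /\
  preserves_pullbacks_with F (fun Y X f => universal_locally_split T1 f).


Lemma Fmor_locally_split {C1 C2 : Category} {T1 : Topology C1} {T2 : Topology C2}
  {F : Functor C1 C2} {Y X : C1} {f : Hom Y X} :
  preserves_coverings T1 T2 F -> locally_split T1 f -> locally_split T2 (Fmor F f).
Proof.
  intros HF [U [HU [rho Hrho]]].
  exists (image_family F U). split.
  - exact (HF X U HU).
  - exists (fun i => Fmor F (rho i)). intros i. simpl.
    rewrite <- Fmor_comp, Hrho. reflexivity.
Qed.

Lemma preserves_pullbacks_with_sub {C1 C2 : Category} {F : Functor C1 C2}
  {Q Q' : forall Y X : C1, Hom Y X -> Prop} :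
  (forall (Y X : C1) (f : Hom Y X), Q Y X f -> Q' Y X f) ->
  preserves_pullbacks_with F Q' -> preserves_pullbacks_with F Q.
Proof.
  intros HQ HF X Y Z P f g p1 p2 Hf Hpb.
  exact (HF X Y Z P f g p1 p2 (HQ Y X f Hf) Hpb).
Qed.

Theorem mainTheorem10 (C1 C2 : Category) (T1 : Topology C1) (T2 : Topology C2)
  (F : Functor C1 C2) :
  preserves_coverings T1 T2 F ->
  preserves_universal F ->
  preserves_pullbacks_with F (fun Y X f => universal f) ->
  continuous T1 T2 F.
Proof.
  intros Hcov Huniv Hpb. split.
  - intros Y X f [Hf Hsplit]. split.
    + exact (Huniv Y X f Hf).
    + exact (Fmor_locally_split Hcov Hsplit).
  - apply (preserves_pullbacks_with_sub (Q' := fun Y X f => universal f)).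
    + intros Y X f [Hf _]. exact Hf.
    + exact Hpb.
Qed.
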